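(* Let $G=(m,n,\boldsymbol{c},\boldsymbol{d},r_{\max},r_{\min})$ be an interbank lending game, let $\alpha\in(0,1]$, and let $\boldsymbol{s}^1\in\boldsymbol{S}$ be any initial strategy profile. Then the eager $\alpha$-uniform best-response dynamics $(\boldsymbol{s}^t)_{t\in\mathbb{N}}$ started at $\boldsymbol{s}^1$ converges to the unique pure Nash equilibrium $\boldsymbol{s}^*$ of $G$.
   Context: An interbank lending game $G=(m,n,\boldsymbol{c},\boldsymbol{d},r_{\max},r_{\min})$ consists of positive integers $m,n$, budgets $\boldsymbol{c}\in\mathbb{R}_{>0}^m$, demands $\boldsymbol{d}\in\mathbb{R}_{>0}^n$ and reals $0<r_{\min}<r_{\max}$. The players are the lenders $L=\{1,\dots,m\}$; $B=\{1,\dots,n\}$ is the set of borrowers. Lender $i$'s strategy set is $S_i=\{s_i\in\mathbb{R}_{\ge0}^n:\sum_{j\in B}s_{ij}\le c_i\}$, the strategy space is $\boldsymbol{S}=\prod_{i\in L}S_i$ with elements $\boldsymbol{s}=(s_{ij})$. The interest rate of borrower $j$ is $r_j(\boldsymbol{s})=(r_{\min}-r_{\max})\frac{\sum_{i\in L}s_{ij}}{d_j}+r_{\max}$ and lender $i$'s utility is $u_i(\boldsymbol{s})=\sum_{j\in B}(r_j(\boldsymbol{s})-r_{\min})s_{ij}$. A pure Nash equilibrium is $\boldsymbol{s}^*\in\boldsymbol{S}$ with $u_i(\boldsymbol{s}^* )\ge u_i(s_i,\boldsymbol{s}^*_{-i})$ for all $i\in L$, $s_i\in S_i$; $G$ has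 exactly one. For $\boldsymbol{s}\in\boldsymbol{S}$, lender $i$'s best-response set is $\mathrm{BR}_i(\boldsymbol{s})=\arg\max\{u_i(z_i,\boldsymbol{s}_{-i}):z_i\in S_i\}$. The eager $\alpha$-uniform best-response dynamics is a sequence $(\boldsymbol{s}^t)_{t\in\mathbb{N}}$ in $\boldsymbol{S}$ such that for every $t$ there is an updating lender $i^t\in L$ chosen (with ties broken in an arbitrary deterministic way) as one whose best response yields the highest utility increase among all lenders, i.e. $i^t\in\arg\max_{i\in L}\max_{\hat s_i\in\mathrm{BR}_i(\boldsymbol{s}^t)}\bigl(u_i(\hat s_i,\boldsymbol{s}^t_{-i})-u_i(\boldsymbol{s}^t)\bigr)$, and $\boldsymbol{s}^{t+1}=(s^{t+1}_{i^t},\boldsymbol{s}^t_{-i^t})$ with $s^{t+1}_{i^t}=s^t_{i^t}+\alpha(\hat s^t_{i^t}-s^t_{i^t})$ for some $\hat s^t_{i^t}\in\mathrm{BR}_{i^t}(\boldsymbol{s}^t)$. Convergence means $\boldsymbol{s}^t\to\boldsymbol{s}^*$ as $t\to\infty$. *)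

From HB Require Import structures.
From mathcomp Require Import all_boot all_order all_algebra.
From mathcomp Require Import all_classical all_reals all_analysis.
Set Implicit Arguments. Unset Strict Implicit. Unset Printing Implicit Defensive.
Import Order.TTheory GRing.Theory Num.Theory.
Import numFieldNormedType.Exports.
Local Open Scope ring_scope.

Section IBL.
Variables (R : realType) (m n : nat).
Variables (c : 'I_m -> R) (d : 'I_n -> R) (rmax rmin : R).

(* A strategy profile s = (s_ij) is an m x n matrix; row i is lender i's strategy. *)

Definition rate (s : 'M[R]_(m, n)) (j : 'I_n) : R :=
  (rmin - rmax) * ((\sum_(i < m) s i j) / d j) + rmax.

Definition util (s : 'M[R]_(m, n)) (i : 'I_m) : R :=
  \sum_(j < n) (rate s j - rmin) * s i j.

Definition in_Si (i : 'I_m) (z : 'rV[R]_n) : Prop :=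
  (forall j, 0 <= z 0 j) /\ \sum_(j < n) z 0 j <= c i.

Definition in_S (s : 'M[R]_(m, n)) : Prop := forall i, in_Si i (row i s).

Definition replace_row (s : 'M[R]_(m, n)) (i : 'I_m) (z : 'rV[R]_n) : 'M[R]_(m, n) :=
  \matrix_(k, j) if k == i then z 0 j else s k j.

Definition is_BR (s : 'M[R]_(m, n)) (i : 'I_m) (z : 'rV[R]_n) : Prop :=
  in_Si i z /\
  forall w, in_Si i w -> util (replace_row s i w) i <= util (replace_row s i z) i.

Definition is_NE (s : 'M[R]_(m, n)) : Prop :=
  in_S s /\
  forall i z, in_Si i z -> util (replace_row s i z) i <= util s i.

Definition gain (s : 'M[R]_(m, n)) (i : 'I_m) (z : 'rV[R]_n) : R :=
  util (replace_row s i z) i - util s i.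

Definition eager_uniform_BR (alpha : R) (s : nat -> 'M[R]_(m, n)) : Prop :=
  (forall t, in_S (s t)) /\
  forall t, exists i : 'I_m,
    (exists z, is_BR (s t) i z /\
       forall (k : 'I_m) w, is_BR (s t) k w -> gain (s t) k w <= gain (s t) i z) /\
    exists shat, is_BR (s t) i shat /\
      s t.+1 = replace_row (s t) i (row i (s t) + alpha *: (shat - row i (s t))).

End IBL.

From HB Require Import structures.
From mathcomp Require Import all_boot all_order all_algebra.
From mathcomp Require Import all_classical all_reals all_analysis.
From mathcomp Require Import ring lra.
Import Order.TTheory GRing.Theory Num.Theory.
Import numFieldNormedType.Exports.
Local Open Scope classical_set_scope.
Local Open Scope ring_scope.

(** With [B_j] the total amount lent to borrower [j], the function
      [Phi(s) = sum_j (B_j - (B_j^2 + sum_i s_ij^2) / (2 d_j))]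
    changes under a unilateral deviation of lender [i] by exactly [i]'s utility
    gain divided by [rmax - rmin]. [Phi] is concave along each row, so an
    alpha-step towards a best response gains at least alpha times the
    best-response gain, which by eagerness dominates alpha times the gain of
    any lender switching to any strategy. [Phi] is bounded by the total budget,
    so its increments, and with them all available gains, tend to 0. Finally
    [Phi] is strongly concave: the gains of moving a quarter of the way from
    [s^t] towards [s*] and from [s*] towards [s^t] sum to at least
    [sum_ij (s*_ij - s^t_ij)^2 / (8 d_j)], and the second gain is nonpositive
    because [s*] is an equilibrium. *)

Lemma continuous_sum {T : topologicalType} {K : numFieldType} {I : Type}
    (r : seq I) (F : I -> T -> K) :
  (forall i, continuous (F i)) -> continuous (fun x => \sum_(i <- r) F i x).
Proof.
move=> Fc; rewrite -fct_sumE.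
apply: (big_ind (fun f : T -> K => continuous f)) => //.
  by move=> x; exact: cst_continuous.
by move=> f g fc gc x; exact: continuousD (fc x) (gc x).
Qed.

Lemma ler_term_sum {R : numDomainType} {I : finType} (F : I -> R) i :
  (forall j, 0 <= F j) -> F i <= \sum_j F j.
Proof. by move=> F0; rewrite (bigD1 i) //= lerDl sumr_ge0. Qed.

Lemma nondecreasing_bounded_increments_cvg0 {R : realType} (u : R ^nat) :
  nondecreasing_seq u -> has_ubound (range u) ->
  (fun t => u t.+1 - u t) @ \oo --> 0.
Proof.
move=> u_nd u_ub; have u_cvg := nondecreasing_cvgn u_nd u_ub.
rewrite -(subrr (sup (range u))); apply: cvgB => //.
by rewrite (cvg_shiftS u).
Qed.

Section Potential.
Context {R : realType} {m n : nat}.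
Variable d : 'I_n -> R.
Hypothesis d_gt0 : forall j, 0 < d j.
Implicit Types (s x y : 'M[R]_(m, n)) (z : 'rV[R]_n).

Definition borrowed (s : 'M[R]_(m, n)) j := \sum_(k < m) s k j.

Definition potential (s : 'M[R]_(m, n)) :=
  \sum_(j < n)
    (borrowed s j - (borrowed s j ^+ 2 + \sum_(k < m) s k j ^+ 2) / (2 * d j)).

(* The partial derivative of [potential] in the entry [s k j]. *)
Definition marginal (s : 'M[R]_(m, n)) k j := 1 - (borrowed s j + s k j) / d j.

Definition potential_gain (s : 'M[R]_(m, n)) k (z : 'rV[R]_n) :=
  \sum_(j < n) ((z 0 j - s k j) * marginal s k j - (z 0 j - s k j) ^+ 2 / d j).

Definition wsqdist (x y : 'M[R]_(m, n)) :=
  \sum_(k < m) \sum_(j < n) (y k j - x k j) ^+ 2 / d j.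

Lemma replace_rowE s i z k j :
  replace_row s i z k j = if k == i then z 0 j else s k j.
Proof. by rewrite mxE. Qed.

Lemma sum_replace_row (f : R -> R) s i z j :
  \sum_(k < m) f (replace_row s i z k j) =
  \sum_(k < m) f (s k j) - f (s i j) + f (z 0 j).
Proof.
rewrite (bigD1 i) //= [in RHS](bigD1 i) //= replace_rowE eqxx.
rewrite (eq_bigr (fun k => f (s k j))) => [|k /negbTE ki]; last first.
  by rewrite replace_rowE ki.
ring.
Qed.

Lemma borrowed_replace_row s i z j :
  borrowed (replace_row s i z) j = borrowed s j - s i j + z 0 j.
Proof. exact: (sum_replace_row id). Qed.

Lemma potential_replace_row s i z :
  potential (replace_row s i z) = potential s + potential_gain s i z.
Proof.
rewrite /potential /potential_gain -big_split /=; apply: eq_bigr => j _.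
rewrite borrowed_replace_row (sum_replace_row (fun a : R => a ^+ 2)) /marginal.
(* Abstracting [(d j)^-1] lets [field] succeed without [d j != 0]. *)
by rewrite invfM; move: (d j)^-1 => u; field.
Qed.

Lemma potential_gain_segment s k z t :
  potential_gain s k (row k s + t *: (z - row k s)) =
  t * \sum_(j < n) (z 0 j - s k j) * marginal s k j
  - t ^+ 2 * \sum_(j < n) (z 0 j - s k j) ^+ 2 / d j.
Proof. by rewrite !mulr_sumr -sumrB; apply: eq_bigr => j _; rewrite !mxE; ring. Qed.

Lemma potential_gain_row s k : potential_gain s k (row k s) = 0.
Proof.
have := potential_gain_segment s k (row k s) 0.
by rewrite subrr scaler0 addr0 => ->; rewrite expr0n !mul0r subrr.
Qed.

Lemma potential_gain_step s k z {t} : 0 <= t <= 1 ->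
  t * potential_gain s k z <= potential_gain s k (row k s + t *: (z - row k s)).
Proof.
move=> /andP[t0 t1].
have -> : potential_gain s k z = potential_gain s k (row k s + 1 *: (z - row k s)).
  by rewrite scale1r addrC subrK.
rewrite !potential_gain_segment expr1n !mul1r.
have : 0 <= \sum_(j < n) (z 0 j - s k j) ^+ 2 / d j.
  by apply: sumr_ge0 => j _; rewrite divr_ge0 ?sqr_ge0 ?ltW.
have : 0 <= t * (1 - t) by rewrite mulr_ge0 ?subr_ge0.
nra.
Qed.

Lemma potential_le_budget (c : 'I_m -> R) s : in_S c s -> potential s <= \sum_i c i.
Proof.
move=> sS; apply: (@le_trans _ _ (\sum_(j < n) borrowed s j)).
  apply: ler_sum => j _; rewrite lerBlDr lerDl divr_ge0 //.
    by rewrite addr_ge0 ?sqr_ge0 // sumr_ge0 // => k _; rewrite sqr_ge0.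
  by rewrite mulr_ge0 // ltW.
rewrite /borrowed exchange_big /=; apply: ler_sum => k _.
have [_] := sS k; apply: le_trans.
by apply: ler_sum => j _; rewrite mxE.
Qed.

Lemma wsqdist_ge0 x y : 0 <= wsqdist x y.
Proof.
by rewrite sumr_ge0 // => k _; rewrite sumr_ge0 // => j _; rewrite divr_ge0 ?sqr_ge0 ?ltW.
Qed.

Lemma wsqdist_le_swap_gains x y :
  wsqdist x y <= 8 * \sum_(k < m)
    (potential_gain x k (row k x + 4^-1 *: (row k y - row k x)) +
     potential_gain y k (row k y + 4^-1 *: (row k x - row k y))).
Proof.
pose D j := borrowed y j - borrowed x j.
have per_row k :
    potential_gain x k (row k x + 4^-1 *: (row k y - row k x)) +
    potential_gain y k (row k y + 4^-1 *: (row k x - row k y)) =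
    \sum_(j < n) ((y k j - x k j) * D j / (4 * d j) + (y k j - x k j) ^+ 2 / (8 * d j)).
  rewrite !potential_gain_segment !mulr_sumr -!sumrB -big_split /=.
  apply: eq_bigr => j _; rewrite /marginal /D !mxE !invfM.
  by move: (d j)^-1 => u; field.
have cross : \sum_(k < m) \sum_(j < n) (y k j - x k j) * D j / (4 * d j) =
    \sum_(j < n) D j ^+ 2 / (4 * d j).
  rewrite exchange_big; apply: eq_bigr => j _.
  by rewrite -!mulr_suml sumrB expr2.
rewrite (eq_bigr _ (fun k _ => per_row k)).
under eq_bigr do rewrite big_split /=.
rewrite big_split /= cross /wsqdist mulrDr.
have -> : \sum_(k < m) \sum_(j < n) (y k j - x k j) ^+ 2 / (8 * d j) =
    8^-1 * \sum_(k < m) \sum_(j < n) (y k j - x k j) ^+ 2 / d j.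
  rewrite mulr_sumr; apply: eq_bigr => k _; rewrite mulr_sumr.
  by apply: eq_bigr => j _; rewrite invfM; ring.
rewrite mulrA divff // mul1r lerDr mulr_ge0 // sumr_ge0 // => j _.
by rewrite divr_ge0 ?sqr_ge0 // mulr_ge0 // ltW.
Qed.

Lemma cvg_wsqdist0 (x : nat -> 'M[R]_(m, n)) y :
  wsqdist (x t) y @[t --> \oo] --> 0 -> x @ \oo --> y.
Proof.
move=> /cvgrPdist_lt x_y; apply/cvgrPdist_lt => e e0.
set D := \sum_(j < n) d j.
have D0 : 0 <= D by rewrite sumr_ge0 // => j _; rewrite ltW.
have eps0 : 0 < e ^+ 2 / (D + 1) by rewrite divr_gt0 ?exprn_gt0 ?ltr_wpDl.
apply: filterS (x_y _ eps0) => t; rewrite sub0r normrN => wsqdist_small.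
have -> : `|y - x t| = mx_norm (y - x t) by [].
rewrite mx_normrE; apply: bigmax_lt => // -[k j] _ /=; rewrite !mxE.
have term_ge0 k' j' : 0 <= (y k' j' - x t k' j') ^+ 2 / d j'.
  by rewrite divr_ge0 ?sqr_ge0 ?ltW.
have entry_le : (y k j - x t k j) ^+ 2 / d j <= wsqdist (x t) y.
  apply: le_trans (ler_term_sum (fun j' => _) j (term_ge0 k)) _.
  by apply: (ler_term_sum (fun k' => _) k) => k'; rewrite sumr_ge0.
have dD : d j <= D by apply: ler_term_sum => j'; rewrite ltW.
move: entry_le; rewrite ler_pdivrMr // => entry_le.
have wsqdist0 := wsqdist_ge0 (x t) y.
have wsqdist_lt : wsqdist (x t) y * (D + 1) < e ^+ 2.
  by rewrite -ltr_pdivlMr ?ltr_wpDl // (le_lt_trans (ler_norm _)).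
by apply/ltr_normlP; split; nra.
Qed.

Variables (rmax rmin : R).

Lemma util_borrowed s i :
  util d rmax rmin s i =
  (rmax - rmin) * \sum_(j < n) (1 - borrowed s j / d j) * s i j.
Proof.
by rewrite /util mulr_sumr; apply: eq_bigr => j _; rewrite /rate /borrowed; ring.
Qed.

Lemma gainE s i z : gain d rmax rmin s i z = (rmax - rmin) * potential_gain s i z.
Proof.
rewrite /gain !util_borrowed -mulrBr -sumrB; congr (_ * _); apply: eq_bigr => j _.
by rewrite borrowed_replace_row replace_rowE eqxx /marginal; ring.
Qed.

End Potential.

Section Strategies.
Context {R : realType} {m n : nat}.
Variable c : 'I_m -> R.
Implicit Types (x y z : 'rV[R]_n).

Lemma in_Si_convex {i x y t} : in_Si c i x -> in_Si c i y -> 0 <= t <= 1 ->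
  in_Si c i (x + t *: (y - x)).
Proof.
move=> [x0 x_c] [y0 y_c] /andP[t0 t1]; split.
  by move=> j; rewrite !mxE; have := x0 j; have := y0 j; nra.
under eq_bigr do rewrite !mxE.
have -> : \sum_(j < n) (x 0 j + t * (y 0 j - x 0 j)) =
    (1 - t) * \sum_(j < n) x 0 j + t * \sum_(j < n) y 0 j.
  by rewrite !mulr_sumr -big_split; apply: eq_bigr => j _ /=; ring.
nra.
Qed.

Lemma in_Si_compact i : compact [set z : 'rV[R]_n | in_Si c i z].
Proof.
have closedS : closed [set z : 'rV[R]_n | in_Si c i z].
  have -> : [set z : 'rV[R]_n | in_Si c i z] =
      \bigcap_(j in setT) [set z : 'rV[R]_n | 0 <= z 0 j] `&`
      [set z : 'rV[R]_n | \sum_(j < n) z 0 j <= c i].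
    by apply/seteqP; split => z [z0 z_c]; split => // j; [move=> _ |]; exact: z0.
  apply: closedI.
    apply: closed_bigI => j _.
    apply: (@preimage_closed _ _ (fun z : 'rV[R]_n => z 0 j) [set x | 0 <= x]).
      by move=> z _; exact: coord_continuous.
    exact: closed_ge.
  apply: (@preimage_closed _ _ (fun z : 'rV[R]_n => \sum_(j < n) z 0 j)
    [set x | x <= c i]).
    by move=> z _; apply: continuous_sum => j; exact: coord_continuous.
  exact: closed_le.
apply: (subclosed_compact closedS
  (@rV_compact _ _ (fun=> `[0, c i]%classic) (fun=> @segment_compact _ 0 (c i)))).
move=> z [z0 z_c] j /=; rewrite in_itv /= z0 /=; apply: le_trans z_c.
exact: (ler_term_sum (fun j => z 0 j)).
Qed.

Lemma BR_exists (d : 'I_n -> R) rmax rmin (s : 'M[R]_(m, n)) i : 0 <= c i ->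
  exists z, is_BR c d rmax rmin s i z.
Proof.
move=> c0.
have nonempty : [set z : 'rV[R]_n | in_Si c i z] !=set0.
  by exists 0; split => [j|]; rewrite ?big1 // => *; rewrite mxE.
have gain_cont : continuous (gain d rmax rmin s i).
  pose p j := ('X - (s i j)%:P) * (marginal d s i j)%:P
              - ('X - (s i j)%:P) ^+ 2 * (d j)^-1%:P.
  have -> : gain d rmax rmin s i = fun z => (rmax - rmin) * \sum_(j < n) (p j).[z 0 j].
    apply/funext => z; rewrite gainE; congr (_ * _).
    by apply: eq_bigr => j _; rewrite !hornerE.
  move=> z; apply: (continuous_comp (g := *%R (rmax - rmin))); last first.
    exact: mulrl_continuous.
  apply: continuous_sum => j {}z.
  apply: (continuous_comp (f := fun z : 'rV[R]_n => z 0 j)).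
    exact: coord_continuous.
  exact: continuous_horner.
have [z zS z_max] :=
  EVT_max_rV nonempty (in_Si_compact i) (continuous_subspaceT gain_cont).
exists z; split; first by rewrite inE in zS.
by move=> w wS; have := z_max w; rewrite inE /gain lerD2r; apply.
Qed.

End Strategies.

Section BestResponse.
Context {R : realType} {m n : nat} {c : 'I_m -> R} {d : 'I_n -> R} {rmax rmin : R}.
Context {s : 'M[R]_(m, n)}.
Implicit Types (z w : 'rV[R]_n).

Lemma is_BR_gain_ge {k z w} :
  is_BR c d rmax rmin s k z -> in_Si c k w ->
  gain d rmax rmin s k w <= gain d rmax rmin s k z.
Proof. by move=> [_ z_max] wS; rewrite lerD2r; exact: z_max. Qed.

Lemma is_BR_gain_eq {k z z'} :
  is_BR c d rmax rmin s k z -> is_BR c d rmax rmin s k z' ->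
  gain d rmax rmin s k z = gain d rmax rmin s k z'.
Proof.
by move=> zBR z'BR; apply/le_anti; rewrite !is_BR_gain_ge //; [case: z'BR | case: zBR].
Qed.

End BestResponse.

Section Dynamics.
Context {R : realType} {m n : nat}.
Context {c : 'I_m -> R} {d : 'I_n -> R} {rmax rmin alpha : R}.
Context {s : nat -> 'M[R]_(m, n)}.
Hypotheses (c_ge0 : forall i, 0 <= c i) (d_gt0 : forall j, 0 < d j).
Hypotheses (rmin_lt_rmax : rmin < rmax) (alpha_gt0 : 0 < alpha) (alpha_le1 : alpha <= 1).
Hypothesis s_dyn : eager_uniform_BR c d rmax rmin alpha s.

Lemma dynamics_step t k w : in_Si c k w ->
  alpha * potential_gain d (s t) k w <= potential d (s t.+1) - potential d (s t).
Proof.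
move=> wS; have [i [[z [zBR z_max]] [shat [shatBR ->]]]] := s_dyn.2 t.
rewrite potential_replace_row addrC addKr.
have [zk zkBR] := BR_exists c d rmax rmin (s t) k (c_ge0 k).
have gain_le : gain d rmax rmin (s t) k w <= gain d rmax rmin (s t) i shat.
  rewrite -(is_BR_gain_eq zBR shatBR).
  exact: le_trans (is_BR_gain_ge zkBR wS) (z_max k zk zkBR).
have alpha01 : 0 <= alpha <= 1 by rewrite ltW.
apply: le_trans (potential_gain_step d d_gt0 (s t) i shat alpha01).
apply: ler_wpM2l; first exact: ltW.
by move: gain_le; rewrite !gainE ler_pM2l ?subr_gt0.
Qed.

Lemma potential_increments_cvg0 :
  (fun t => potential d (s t.+1) - potential d (s t)) @ \oo --> 0.
Proof.
apply: nondecreasing_bounded_increments_cvg0.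
  apply/nondecreasing_seqP => t; have [i _] := s_dyn.2 t.
  by have := dynamics_step t i _ (s_dyn.1 t i); rewrite potential_gain_row mulr0 subr_ge0.
by exists (\sum_i c i) => _ [t _ <-]; exact: potential_le_budget d d_gt0 c _ (s_dyn.1 t).
Qed.

Lemma wsqdist_NE_le_increment sstar t : is_NE c d rmax rmin sstar ->
  wsqdist d (s t) sstar <= 8 * m%:R / alpha * (potential d (s t.+1) - potential d (s t)).
Proof.
move=> [sstarS sstar_NE].
set inc := potential d (s t.+1) - potential d (s t).
have quarter : 0 <= (4^-1 : R) <= 1 by rewrite invr_ge0 invf_le1 ?ler0n ?ler1n.
have toward_NE k : potential_gain d (s t) k
    (row k (s t) + 4^-1 *: (row k sstar - row k (s t))) <= alpha^-1 * inc.
  rewrite -(ler_pM2l alpha_gt0) mulrA divff ?mul1r ?gt_eqF //.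
  exact/dynamics_step/(in_Si_convex c (s_dyn.1 t k) (sstarS k) quarter).
have from_NE k : potential_gain d sstar k
    (row k sstar + 4^-1 *: (row k (s t) - row k sstar)) <= 0.
  have := sstar_NE k _ (in_Si_convex c (sstarS k) (s_dyn.1 t k) quarter).
  by rewrite -subr_le0 -/(gain _ _ _ _ _ _) gainE pmulr_rle0 ?subr_gt0.
apply: le_trans (wsqdist_le_swap_gains d d_gt0 (s t) sstar) _.
have -> : 8 * m%:R / alpha * inc = 8 * \sum_(k < m) alpha^-1 * inc.
  by rewrite sumr_const card_ord -mulr_natl; ring.
rewrite ler_pM2l //; apply: ler_sum => k _.
by rewrite -[X in _ <= X]addr0 lerD.
Qed.

End Dynamics.

Theorem theorem4p1 (R : realType) (m n : nat) (c : 'I_m -> R) (d : 'I_n -> R)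
    (rmax rmin : R) (alpha : R) (s : nat -> 'M[R]_(m, n)) (sstar : 'M[R]_(m, n)) :
  (0 < m)%N -> (0 < n)%N ->
  (forall i, 0 < c i) -> (forall j, 0 < d j) ->
  0 < rmin -> rmin < rmax ->
  0 < alpha -> alpha <= 1 ->
  is_NE c d rmax rmin sstar ->
  eager_uniform_BR c d rmax rmin alpha s ->
  s @ \oo --> sstar.
Proof.
move=> _ _ c_gt0 d_gt0 _ rmin_lt_rmax alpha_gt0 alpha_le1 sstar_NE s_dyn.
have c_ge0 i : 0 <= c i by rewrite ltW.
have inc_cvg0 :=
  potential_increments_cvg0 c_ge0 d_gt0 rmin_lt_rmax alpha_gt0 alpha_le1 s_dyn.
have wsqdist_le t :=
  wsqdist_NE_le_increment c_ge0 d_gt0 rmin_lt_rmax alpha_gt0 alpha_le1 s_dyn _ t sstar_NE.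
apply: (cvg_wsqdist0 d d_gt0); apply: squeeze_cvgr (cvg_cst 0) _.
- by near=> t; rewrite wsqdist_ge0 //=; exact: wsqdist_le.
- by rewrite -(mulr0 (8 * m%:R / alpha)); apply: cvgMr.
Unshelve. all: by end_near.
Qed.
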